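(* Let $k\ge2$ and let $\alpha(x)=\forall y\,([y^{-1}xy,x]=e)$. The first-order group formula $\beta(y)=\forall x\,(\alpha(x)\rightarrow y^{-1}xy=x^k)$ defines in $BS(1,k)$ the set $Ab$.
   Context: $BS(1,k)=\langle a,b\mid b^{-1}ab=a^k\rangle$, identified with $\mathbb{Z}[1/k]\rtimes\mathbb{Z}$ (pairs $(y,m)$, $y\in\mathbb{Z}[1/k]=\{zk^i:z,i\in\mathbb{Z}\}$, product $(y_1,m_1)(y_2,m_2)=(y_1+y_2k^{-m_1},m_1+m_2)$), with $a=(1,0)$, $b=(0,1)$; $a^y=(y,0)$ for $y\in\mathbb{Z}[1/k]$. $Ab=\{a^yb:y\in\mathbb{Z}[1/k]\}=\{(y,1):y\in\mathbb{Z}[1/k]\}$. The commutator is $[x,y]=x^{-1}y^{-1}xy$. *)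

(* BS(1,k) realised concretely as Z[1/k] x| Z, pairs (y,m)
   with y : rat lying in Z[1/k] and m : int. *)
From mathcomp Require Import all_boot all_order all_algebra.
Set Implicit Arguments. Unset Strict Implicit. Unset Printing Implicit Defensive.
Import Order.TTheory GRing.Theory Num.Theory.
Local Open Scope ring_scope.

Definition inZk (k : nat) (y : rat) : Prop :=
  exists (z i : int), y = z%:~R * (k%:R : rat) ^ i.

Definition BSel (k : nat) (g : rat * int) : Prop := inZk k g.1.

Definition bsmul (k : nat) (g h : rat * int) : rat * int :=
  (g.1 + h.1 * (k%:R : rat) ^ (- g.2), g.2 + h.2).

Definition bsinv (k : nat) (g : rat * int) : rat * int :=
  (- (g.1 * (k%:R : rat) ^ g.2), - g.2).

Definition bsone : rat * int := (0, 0).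

Definition bspow (k : nat) (g : rat * int) (n : nat) : rat * int :=
  iter n (bsmul k g) bsone.

Definition bscomm (k : nat) (x y : rat * int) : rat * int :=
  bsmul k (bsinv k x) (bsmul k (bsinv k y) (bsmul k x y)).

Definition bsconj (k : nat) (x y : rat * int) : rat * int :=
  bsmul k (bsinv k y) (bsmul k x y).

Definition bs_alpha (k : nat) (x : rat * int) : Prop :=
  forall y, BSel k y -> bscomm k (bsconj k x y) x = bsone.

Definition bs_beta (k : nat) (y : rat * int) : Prop :=
  forall x, BSel k x -> bs_alpha k x -> bsconj k x y = bspow k x k.

From mathcomp Require Import all_boot all_order all_algebra.
From mathcomp Require Import ring.
Import Order.TTheory GRing.Theory Num.Theory.
Local Open Scope ring_scope.

(* In BS(1,k) = Z[1/k] x| Z, conjugation by (y, m) acts on the normal subgroup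
   A = Z[1/k] x {0} as multiplication by k^m.  Formula alpha defines exactly A:
   A is abelian and normal, so its elements satisfy alpha; conversely, for
   x = (c, m) the commutator [a^-1 x a, x] equals (-(k^m - 1)^2, 0), which
   vanishes only for m = 0.  Hence beta((y, m)) says that k^m c = k c for every
   c in Z[1/k], i.e. m = 1. *)

Section BaumslagSolitar.

Variable k : nat.

Local Notation kq := (k%:R : rat).

Lemma expz_kq_inj : (1 < k)%N -> injective (fun m : int => kq ^ m).
Proof.
move=> hk m n /= Emn; have kq_gt1 : 1 < kq by rewrite ltr1n.
by apply/eqP; rewrite eq_le -!(ler_eXz2l kq_gt1) Emn lexx.
Qed.

Lemma expz_kq_neq0 (m : int) : (0 < k)%N -> kq ^ m != 0.
Proof. by move=> k_gt0; rewrite expfz_neq0 // pnatr_eq0 -lt0n. Qed.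

Lemma inZk1 : inZk k 1.
Proof. by exists 1, 0; rewrite expr0z mulr1. Qed.

Lemma bsconj_abelian (c y : rat) (m : int) :
  bsconj k (c, 0) (y, m) = (c * kq ^ m, 0).
Proof.
rewrite /bsconj /bsmul /bsinv /= oppr0 expr0z mulr1 opprK; congr (_, _); ring.
Qed.

Lemma bspow_abelian (c : rat) (n : nat) : bspow k (c, 0) n = (c *+ n, 0).
Proof.
elim: n => [|n IHn] //; rewrite /bspow /= -/(bspow k (c, 0) n) IHn.
by rewrite /bsmul /= oppr0 expr0z mulr1 addr0 mulrS.
Qed.

Lemma bs_alpha_abelian (c : rat) : bs_alpha k (c, 0).
Proof.
move=> [y m] _; rewrite bsconj_abelian /bscomm /bsmul /bsinv /bsone /=.
rewrite !oppr0 !expr0z !mulr1 !addr0; congr (_, _); ring.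
Qed.

Lemma bsconj_by_a (c : rat) (m : int) :
  bsconj k (c, m) (1, 0) = (c + kq ^ (- m) - 1, m).
Proof.
rewrite /bsconj /bsmul /bsinv /= oppr0 expr0z !mulr1 add0r; congr (_, _); ring.
Qed.

Lemma bscomm_same_height (c' c : rat) (m : int) : (0 < k)%N ->
  bscomm k (c', m) (c, m) = ((c' - c) * kq ^ m * (kq ^ m - 1), 0).
Proof.
move=> /(expz_kq_neq0 m) kqm_neq0.
rewrite /bscomm /bsmul /bsinv /= !opprK -invr_expz.
by congr (_, _); [field | ring].
Qed.

Lemma bs_alpha_height (x : rat * int) : (1 < k)%N -> bs_alpha k x -> x.2 = 0.
Proof.
case: x => c m hk /= /(_ (1, 0) inZk1).
have k_gt0 : (0 < k)%N by apply: ltnW.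
have kqm_neq0 := expz_kq_neq0 m k_gt0.
rewrite bsconj_by_a bscomm_same_height // => -[].
have -> : (c + kq ^ (- m) - 1 - c) * kq ^ m * (kq ^ m - 1) = - (kq ^ m - 1) ^+ 2.
  by rewrite -invr_expz; field.
move/eqP; rewrite oppr_eq0 sqrf_eq0 subr_eq0 -(expr0z kq) => /eqP.
exact: expz_kq_inj.
Qed.

Lemma bs_betaE (g : rat * int) : (1 < k)%N -> bs_beta k g <-> g.2 = 1.
Proof.
case: g => y m hk /=; split.
- move=> /(_ (1, 0) inZk1 (bs_alpha_abelian 1)).
  rewrite bsconj_abelian bspow_abelian mul1r => -[Ekm].
  by apply: expz_kq_inj => //=; rewrite Ekm expr1z.
- move=> -> [c n] _ /[dup] /(bs_alpha_height _ hk) /= -> _.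
  by rewrite bsconj_abelian bspow_abelian expr1z mulr_natr.
Qed.

End BaumslagSolitar.

Theorem lemma4p5 (k : nat) (hk : (2 <= k)%N) (g : rat * int) :
  BSel k g ->
  (bs_beta k g <-> exists y : rat, inZk k y /\ g = (y, 1%:Z)).
Proof.
case: g => y m /= Zy; rewrite (bs_betaE _ (y, m) hk) /=; split.
- by move=> ->; exists y.
- by case=> _ [_ [_ ->]].
Qed.
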